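(* Let $\alpha$ be any graph function on a strongly connected directed graph $G$. Then any fair infinite sequence of raising operations applied starting from $\alpha$ produces graph functions converging to a raising-balanced graph function $\alpha^R$, and $\alpha^R$ is the same for all fair sequences of raising operations (independent of the order of operations). Symmetrically, any fair infinite sequence of lowering operations starting from $\alpha$ converges to a lowering-balanced graph function $\alpha^L$ that is independent of the order of operations.
   Context: $G$ is a strongly connected directed graph on vertex set $\{1,\dots,n\}$ (self-loops allowed). A graph function assigns a real weight $\alpha_{uv}$ to each edge $(u,v)$. Let $\alpha_v^{\text{in}}=\max_{u:(u,v)\in G}\alpha_{uv}$, $\alpha_v^{\text{out}}=\max_{w:(v,w)\in G}\alpha_{vw}$. For $x\in\mathbb R$ and $S$ a set of vertices, $\alpha+xS$ is the graph function $(\alpha+xS)_{uv}=\alpha_{uv}+x(I_S(u)-I_S(v))$, where $I_S$ is the indicator of $S$. A balancing operation at $v$ replaces $\alpha$ by $\alpha+\frac{\alpha_v^{\text{in}}-\alpha_v^{\text{out}}}{2}\{v\}$ (incoming edges at $v$ are increased by $(\alpha_v^{\text{out}}-\alpha_v^{\text{in}})/2$, outgoing edges decreased by the same amount, a self-loop unchanged). The raising imbalance at $v$ is $\rho_v^R=\max\{0,\alpha_v^{\text{out}}-\alpha_v^{\text{in}}\}$ and the lowering imbalance is $\rho_v^L=\max\{0,\alpha_v^{\text{in}}-\alpha_v^{\text{out}}\}$. A raising operation at $v$ performs the balancing operation at $v$ if $\rho^R_v>0$ and does nothing otherwise; a lowering operation at $v$ performs it if $\rho^L_v>0$ and does nothing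 otherwise. $\alpha$ is raising-balanced if $\rho^R_v=0$ for all $v$, lowering-balanced if $\rho^L_v=0$ for all $v$. A sequence of operations (each at a specified vertex) is fair if every vertex occurs infinitely often. *)

From HB Require Import structures.
From mathcomp Require Import all_boot all_order all_algebra.
From mathcomp Require Import all_classical all_reals topology normedtype sequences.
Set Implicit Arguments. Unset Strict Implicit. Unset Printing Implicit Defensive.
Import Order.TTheory GRing.Theory Num.Theory.
Local Open Scope ring_scope.

(* A directed graph on {0,..,n-1} is an edge relation G : rel 'I_n
   (self-loops allowed).  A graph function is a map alpha : 'I_n -> 'I_n -> R;
   only its values on edges (G u v) are meaningful. *)

Definition strongly_connected (n : nat) (G : rel 'I_n) : Prop :=
  forall u v : 'I_n, connect G u v.

Section GraphFun.
Variables (R : realType) (n : nat) (G : rel 'I_n).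
Implicit Types (alpha : 'I_n -> 'I_n -> R) (v : 'I_n).

(* alpha_v^in = max over in-edges (u,v) of alpha u v (0 if there is none,
   which cannot happen in a strongly connected graph with n >= 2). *)
Definition alpha_in alpha v : R :=
  match [pick u | G u v] with
  | Some u0 => \big[Num.max/alpha u0 v]_(u | G u v) alpha u v
  | None => 0
  end.

Definition alpha_out alpha v : R :=
  match [pick w | G v w] with
  | Some w0 => \big[Num.max/alpha v w0]_(w | G v w) alpha v w
  | None => 0
  end.

Definition shift alpha (x : R) (S : pred 'I_n) : 'I_n -> 'I_n -> R :=
  fun u w => alpha u w + x * ((S u)%:R - (S w)%:R).

Definition balance alpha v : 'I_n -> 'I_n -> R :=
  shift alpha ((alpha_in alpha v - alpha_out alpha v) / 2) (pred1 v).

Definition rhoR alpha v : R := Num.max 0 (alpha_out alpha v - alpha_in alpha v).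
Definition rhoL alpha v : R := Num.max 0 (alpha_in alpha v - alpha_out alpha v).

Definition raise alpha v : 'I_n -> 'I_n -> R :=
  if 0 < rhoR alpha v then balance alpha v else alpha.
Definition lower alpha v : 'I_n -> 'I_n -> R :=
  if 0 < rhoL alpha v then balance alpha v else alpha.

Definition raising_balanced alpha : Prop := forall v, rhoR alpha v = 0.
Definition lowering_balanced alpha : Prop := forall v, rhoL alpha v = 0.

Fixpoint iter_ops (op : ('I_n -> 'I_n -> R) -> 'I_n -> 'I_n -> 'I_n -> R)
  alpha (s : nat -> 'I_n) (k : nat) : 'I_n -> 'I_n -> R :=
  match k with
  | 0 => alpha
  | k'.+1 => op (iter_ops op alpha s k') (s k')
  end.

End GraphFun.

Definition fair (n : nat) (s : nat -> 'I_n) : Prop :=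
  forall (v : 'I_n) (N : nat), exists k, (N <= k)%N /\ s k = v.

(* After any sequence of raising operations the graph function is [alpha]
   reweighted by a potential [p], i.e. [alpha u w + p u - p w], and one raising
   operation at [v] lowers [p v] by half the raising imbalance.  On potentials
   this step is deflationary and monotone, and a potential [q] making the
   reweighted function raising-balanced is a fixed point of it.  Such a [q]
   exists: subtract the maximum cycle mean from [alpha] and take longest-walk
   weights from a vertex of a critical cycle.  Shifting [q] below [0], the
   potentials of a run decrease and stay above [q], so they converge; fairness
   makes the limit balanced.  The limit is thus the largest balanced potential
   below [0], independent of the run.  Lowering is raising on the transposed
   graph. *)

From Pilot Require Import Defs.
From HB Require Import structures.
From mathcomp Require Import all_boot all_order all_algebra.
From mathcomp Require Import all_classical all_reals topology normedtype sequences.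
From mathcomp Require Import ring lra zify.
Import Order.TTheory GRing.Theory Num.Theory.
Import numFieldNormedType.Exports.
Local Open Scope classical_set_scope.
Local Open Scope ring_scope.
Set Implicit Arguments. Unset Strict Implicit.

Lemma nuniq_split (T : eqType) (s : seq T) :
  ~~ uniq s -> exists s1 y s2 s3, s = s1 ++ y :: s2 ++ y :: s3.
Proof.
elim: s => [//|x t IHt] /=; rewrite negb_and negbK => /orP [/splitPr [p1 p2]|/IHt].
  by exists [::], x, p1, p2.
by move=> [s1 [y [s2 [s3 ->]]]]; exists (x :: s1), y, s2, s3.
Qed.

Section Balancing.
Variables (R : realType) (n : nat) (G : rel 'I_n).
Local Notation gfun := ('I_n -> 'I_n -> R).
Implicit Types (a b c alpha : gfun) (p q : 'I_n -> R) (u v w x y : 'I_n).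

Lemma alpha_in_ge b u v : G u v -> b u v <= alpha_in G b v.
Proof.
by move=> Guv; rewrite /alpha_in; case: pickP => [u0 _|/(_ u)]; [exact: le_bigmax_cond|rewrite Guv].
Qed.

Lemma alpha_out_le b e v :
  (exists w, G v w) -> (forall w, G v w -> b v w <= e) -> alpha_out G b v <= e.
Proof.
move=> [w0 Gvw0] le_e; rewrite /alpha_out.
case: pickP => [w1 Gvw1|/(_ w0)]; last by rewrite Gvw0.
by apply: bigmax_le => //; apply: le_e.
Qed.

Lemma alpha_in_leD b c e v : 0 <= e ->
  (forall u, G u v -> b u v <= c u v + e) -> alpha_in G b v <= alpha_in G c v + e.
Proof.
move=> e_ge0 le_bc; rewrite /alpha_in; case: pickP => [u0 Gu0|_]; last by rewrite add0r.
have le_in u : G u v -> b u v <= \big[Num.max/c u0 v]_(u | G u v) c u v + e.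
  by move=> Guv; apply: le_trans (le_bc _ Guv) _; rewrite lerD2r le_bigmax_cond.
by apply: bigmax_le => //; apply: le_in.
Qed.

Lemma alpha_out_leD b c e v : 0 <= e ->
  (forall w, G v w -> b v w <= c v w + e) -> alpha_out G b v <= alpha_out G c v + e.
Proof.
move=> e_ge0 le_bc; rewrite /alpha_out; case: pickP => [w0 Gw0|_]; last by rewrite add0r.
have le_out w : G v w -> b v w <= \big[Num.max/c v w0]_(w | G v w) c v w + e.
  by move=> Gvw; apply: le_trans (le_bc _ Gvw) _; rewrite lerD2r le_bigmax_cond.
by apply: bigmax_le => //; apply: le_out.
Qed.

Lemma rhoR_ge0 b v : 0 <= rhoR G b v.
Proof. by rewrite le_max lexx. Qed.

Lemma rhoR_ge b v : alpha_out G b v - alpha_in G b v <= rhoR G b v.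
Proof. by rewrite le_max lexx orbT. Qed.

Lemma rhoR_le b v e :
  0 <= e -> alpha_out G b v - alpha_in G b v <= e -> rhoR G b v <= e.
Proof. by move=> e_ge0 le_e; rewrite ge_max e_ge0. Qed.

Lemma rhoR_gt0E b v : 0 < rhoR G b v -> rhoR G b v = alpha_out G b v - alpha_in G b v.
Proof. by rewrite /rhoR lt_max ltxx /= => gt0; rewrite max_r ?ltW. Qed.

Lemma rhoR_eq0 b v : alpha_out G b v <= alpha_in G b v -> rhoR G b v = 0.
Proof. by move=> le_out; apply/le_anti; rewrite rhoR_ge0 rhoR_le // subr_le0. Qed.


Definition reweight alpha p : gfun := fun u w => alpha u w + p u - p w.

Lemma reweight_addc alpha p e : reweight alpha (fun u => p u + e) = reweight alpha p.
Proof. by apply/funext => u; apply/funext => w; rewrite /reweight; ring. Qed.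

Definition raise_pot alpha p v : 'I_n -> R :=
  fun u => p u - (u == v)%:R * (rhoR G (reweight alpha p) v / 2).

Fixpoint raise_pots alpha (s : nat -> 'I_n) k : 'I_n -> R :=
  if k is k'.+1 then raise_pot alpha (raise_pots alpha s k') (s k') else fun=> 0.

Lemma raise_reweight alpha p v :
  raise G (reweight alpha p) v = reweight alpha (raise_pot alpha p v).
Proof.
apply/funext => u; apply/funext => w; rewrite /raise /balance /Defs.shift /raise_pot /=.
case: ifP => [/rhoR_gt0E ->|/negbT rho_le0].
  by rewrite /reweight; case: (u == v); case: (w == v) => /=; ring.
have -> : rhoR G (reweight alpha p) v = 0 by apply/le_anti; rewrite rhoR_ge0 andbT leNgt.
rewrite /reweight; ring.
Qed.

Lemma iter_raise_reweight alpha s k :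
  iter_ops (raise G) alpha s k = reweight alpha (raise_pots alpha s k).
Proof.
elim: k => [|k IHk] /=; last by rewrite IHk raise_reweight.
by apply/funext => u; apply/funext => w; rewrite /reweight; ring.
Qed.

Lemma raise_pot_le alpha p v u : raise_pot alpha p v u <= p u.
Proof. by rewrite /raise_pot lerBlDr lerDl mulr_ge0 ?divr_ge0 ?rhoR_ge0. Qed.

Lemma raise_pot_homo alpha p q v :
  (forall u, p u <= q u) -> forall u, raise_pot alpha p v u <= raise_pot alpha q v u.
Proof.
move=> le_pq u; rewrite /raise_pot; case: eqP => [->|_] /=; last by rewrite !mul0r !subr0.
rewrite !mul1r; set d := q v - p v.
have d_ge0 : 0 <= d by rewrite subr_ge0.
have out_le : alpha_out G (reweight alpha q) v <= alpha_out G (reweight alpha p) v + d.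
  by apply: alpha_out_leD => // w _; rewrite /reweight /d; move: (le_pq w); lra.
have in_le : alpha_in G (reweight alpha p) v <= alpha_in G (reweight alpha q) v + d.
  by apply: alpha_in_leD => // w _; rewrite /reweight /d; move: (le_pq w); lra.
have : rhoR G (reweight alpha q) v <= rhoR G (reweight alpha p) v + 2 * d.
  apply: rhoR_le; first by rewrite addr_ge0 ?rhoR_ge0 ?mulr_ge0.
  by move: (rhoR_ge (reweight alpha p) v); lra.
by rewrite /d; lra.
Qed.

Lemma raise_pot_id alpha q v :
  raising_balanced G (reweight alpha q) -> raise_pot alpha q v = q.
Proof. by move=> bal; apply/funext => u; rewrite /raise_pot bal mul0r mulr0 subr0. Qed.

Section RaiseLimit.
Variables (alpha : gfun) (s : nat -> 'I_n) (q0 : 'I_n -> R).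
Hypotheses (q0_bal : raising_balanced G (reweight alpha q0)) (q0_le0 : forall u, q0 u <= 0).

Lemma raise_pots_noninc u :
  {homo (fun k => raise_pots alpha s k u) : i j / (i <= j)%N >-> j <= i}.
Proof.
move=> i j /subnK <-; elim: (j - i)%N => [|d IHd] /=; first by rewrite add0n.
exact: le_trans (raise_pot_le _ _ _ _) IHd.
Qed.

Lemma raise_pots_ge q : raising_balanced G (reweight alpha q) -> (forall u, q u <= 0) ->
  forall k u, q u <= raise_pots alpha s k u.
Proof.
move=> q_bal q_le0; elim=> [|k IHk] u //=.
by rewrite -(raise_pot_id (s k) q_bal); apply: raise_pot_homo.
Qed.

Definition raise_lim u := inf (range (fun k => raise_pots alpha s k u)).

Let pots_lbound u : has_lbound (range (fun k => raise_pots alpha s k u)).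
Proof. by exists (q0 u) => _ [k _ <-]; apply: raise_pots_ge. Qed.

Let pots_neq0 u : range (fun k => raise_pots alpha s k u) !=set0.
Proof. by exists (raise_pots alpha s 0 u), 0%N. Qed.

Lemma raise_pots_cvg u : (fun k => raise_pots alpha s k u) @ \oo --> raise_lim u.
Proof. exact: nonincreasing_cvgn (raise_pots_noninc u) (pots_lbound u). Qed.

Lemma raise_lim_le k u : raise_lim u <= raise_pots alpha s k u.
Proof. by apply: ge_inf; [exact: pots_lbound | exists k]. Qed.

Lemma raise_lim_ge q : raising_balanced G (reweight alpha q) -> (forall u, q u <= 0) ->
  forall u, q u <= raise_lim u.
Proof. by move=> q_bal q_le0 u; apply: lb_le_inf => // _ [k _ <-]; apply: raise_pots_ge. Qed.

Lemma raise_pots_near u e : 0 < e ->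
  exists N, forall k, (N <= k)%N -> raise_pots alpha s k u < raise_lim u + e.
Proof.
move=> e_gt0; have [_ [N _ <-] lt_e] := inf_adherent e_gt0 (conj (pots_neq0 u) (pots_lbound u)).
by exists N => k le_Nk; apply: le_lt_trans lt_e; apply: raise_pots_noninc.
Qed.

Lemma raise_lim_balanced : fair s -> raising_balanced G (reweight alpha raise_lim).
Proof.
move=> s_fair v; set L := raise_lim; set r := rhoR G (reweight alpha L) v.
have [r_gt0|] := ltP 0 r; last by move=> r_le0; apply/le_anti; rewrite r_le0 rhoR_ge0.
have e_gt0 : 0 < r / 8 by lra.
have /fin_all_exists [N near_L] u := raise_pots_near u e_gt0.
have [k [le_Nk skv]] := s_fair v (\max_u N u).
pose P := raise_pots alpha s k.
have P_near u : P u < L u + r / 8.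
  by apply: near_L; apply: leq_trans le_Nk; exact: leq_bigmax.
have L_le u : L u <= P u := raise_lim_le k u.
have out_le : alpha_out G (reweight alpha L) v <= alpha_out G (reweight alpha P) v + r / 8.
  apply: alpha_out_leD; first lra.
  by move=> w _; rewrite /reweight; move: (L_le v) (P_near w); lra.
have in_le : alpha_in G (reweight alpha P) v <= alpha_in G (reweight alpha L) v + r / 8.
  apply: alpha_in_leD; first lra.
  by move=> w _; rewrite /reweight; move: (L_le v) (P_near w); lra.
(* At step [k] the potential of [v] drops by at least [3r/8], below [L v]. *)
have := raise_lim_le k.+1 v; rewrite /= /raise_pot skv eqxx mul1r -/P.
move: (rhoR_ge (reweight alpha P) v) (rhoR_gt0E r_gt0) (P_near v); rewrite -/r; lra.
Qed.

End RaiseLimit.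

Lemma raise_lim_eq alpha s s' q0 :
  raising_balanced G (reweight alpha q0) -> (forall u, q0 u <= 0) ->
  fair s -> fair s' -> raise_lim alpha s = raise_lim alpha s'.
Proof.
move=> q0_bal q0_le0 s_fair s'_fair; apply/funext => u.
have lim_le0 t w : raise_lim alpha t w <= 0 := raise_lim_le t q0_bal q0_le0 0 w.
have bal t : fair t -> raising_balanced G (reweight alpha (raise_lim alpha t)).
  exact: raise_lim_balanced q0_bal q0_le0.
by apply/le_anti/andP; split; apply: raise_lim_ge; by [apply: bal | move=> w].
Qed.

Fixpoint wt a x (s : seq 'I_n) : R := if s is y :: t then a x y + wt a y t else 0.

Lemma wt_cat a x s1 s2 : wt a x (s1 ++ s2) = wt a x s1 + wt a (last x s1) s2.
Proof. by elim: s1 x => [|y t IHt] x /=; rewrite ?add0r // IHt addrA. Qed.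

Lemma wt_rcons a x s y : wt a x (rcons s y) = wt a x s + a (last x s) y.
Proof. by rewrite -cats1 wt_cat /= addr0. Qed.

Lemma wt_subc a e x s : wt (fun u w => a u w - e) x s = wt a x s - e * (size s)%:R.
Proof.
elim: s x => [|y t IHt] x /=; first by rewrite mulr0 subr0.
by rewrite IHt -addn1 natrD; ring.
Qed.

Definition closed_walk x (s : seq 'I_n) := path G x s && (last x s == x).

Lemma closed_walk_split x s : closed_walk x s -> (n < size s)%N ->
  exists y s1 s2, [/\ closed_walk x s1, closed_walk y s2,
    (0 < size s1)%N && (0 < size s2)%N, size s = (size s1 + size s2)%N &
    forall a, wt a x s = wt a x s1 + wt a y s2].
Proof.
move=> /andP [walk_s /eqP last_s] gt_n.
have : ~~ uniq s.
  apply: contraL gt_n => uniq_s; rewrite -leqNgt.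
  have := uniq_leq_size uniq_s (fun z _ => mem_enum 'I_n z).
  by rewrite size_enum_ord.
case/nuniq_split => [s1 [y [s2 [s3 def_s]]]]; subst s.
move: walk_s last_s; rewrite cat_path last_cat /= cat_path last_cat /=.
move=> /and3P [walk1 Gy /and3P [walk2 Gy' walk3]] last_s.
exists y, (s1 ++ y :: s3), (rcons s2 y); split.
- by rewrite /closed_walk cat_path walk1 /= Gy walk3 last_cat /= last_s.
- by rewrite /closed_walk rcons_path walk2 Gy' last_rcons /=.
- by rewrite size_rcons size_cat addnS.
- by rewrite !size_cat /= size_cat size_rcons /=; lia.
- by move=> a; rewrite !wt_cat /= wt_cat /= wt_rcons; ring.
Qed.

Lemma short_closed_walk x s : closed_walk x s -> (0 < size s)%N ->
  exists y t, closed_walk y t && (0 < size t <= n)%N.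
Proof.
have [m] := ubnP (size s); elim: m x s => // m IHm x s lt_m closed_s s_gt0.
have [le_n|gt_n] := leqP (size s) n; first by exists x, s; rewrite closed_s s_gt0.
have [y [s1 [s2 [_ closed2 /andP [s1_gt0 s2_gt0] size_s _]]]] := closed_walk_split closed_s gt_n.
by apply: (IHm y s2) => //; move: lt_m; rewrite size_s; lia.
Qed.

Lemma closed_walk_wt_le a e :
  (forall x s, closed_walk x s -> (0 < size s <= n)%N -> wt a x s <= e * (size s)%:R) ->
  forall x s, closed_walk x s -> wt a x s <= e * (size s)%:R.
Proof.
move=> short_le x s; have [m] := ubnP (size s); elim: m x s => // m IHm x s lt_m closed_s.
have [le_n|gt_n] := leqP (size s) n.
  by case: s lt_m closed_s le_n => [|y t] *; [rewrite mulr0 | apply: short_le].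
have [y [s1 [s2 [closed1 closed2 /andP [s1_gt0 s2_gt0] size_s ->]]]] :=
  closed_walk_split closed_s gt_n.
rewrite size_s natrD mulrDr; apply: lerD.
  by apply: IHm closed1; move: lt_m; rewrite size_s; lia.
by apply: IHm closed2; move: lt_m; rewrite size_s; lia.
Qed.

Lemma max_cycle_mean a : (exists x s, closed_walk x s && (0 < size s)%N) ->
  exists e r ss, [/\ forall x s, closed_walk x s -> wt a x s <= e * (size s)%:R,
    closed_walk r ss, (0 < size ss)%N & wt a r ss = e * (size ss)%:R].
Proof.
move=> [x0 [s0 /andP [closed0 s0_gt0]]].
have [x1 [s1 /andP [closed1 /andP [s1_gt0 s1_le]]]] := short_closed_walk closed0 s0_gt0.
pose short (c : 'I_n * n.-bseq 'I_n) := closed_walk c.1 c.2 && (0 < size c.2)%N.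
pose mean (c : 'I_n * n.-bseq 'I_n) := wt a c.1 c.2 / (size c.2)%:R.
have short1 : short (x1, Bseq s1_le) by rewrite /short closed1.
case: (arg_maxP mean short1) => -[r ss] /andP [closed_ss ss_gt0] mean_max.
exists (mean (r, ss)), r, ss; split => //.
  apply: closed_walk_wt_le => x s closed_s /andP [s_gt0 s_le].
  have := mean_max (x, Bseq s_le); rewrite /short closed_s s_gt0 => /(_ isT).
  by rewrite /mean /= ler_pdivrMr ?ltr0n.
by rewrite /mean /= divfK // pnatr_eq0 -lt0n.
Qed.

Section LongestWalk.
Variables (b : gfun) (r : 'I_n) (ss : seq 'I_n).
Hypotheses (G_sc : strongly_connected G)
  (closed_le0 : forall x s, closed_walk x s -> wt b x s <= 0)
  (closed_ss : closed_walk r ss) (ss_gt0 : (0 < size ss)%N) (wt_ss : wt b r ss = 0).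

Let walk_wts v := [set wt b r s | s in [set s | path G r s /\ last r s = v]].

Definition longest v := sup (walk_wts v).

Let walk_wts_sup v : has_sup (walk_wts v).
Proof.
have /connectP [p walk_p last_p] := G_sc r v.
have /connectP [p' walk_p' last_p'] := G_sc v r.
split; first by exists (wt b r p), p.
exists (- wt b v p') => _ [s [walk_s last_s] <-].
have := closed_le0 (x := r) (s := s ++ p').
rewrite /closed_walk cat_path walk_s last_s walk_p' last_cat last_s -last_p' eqxx wt_cat last_s.
by move=> /(_ isT); lra.
Qed.

Lemma wt_le_longest v s : path G r s -> last r s = v -> wt b r s <= longest v.
Proof. by move=> walk_s last_s; apply: (sup_upper_bound (walk_wts_sup v)); exists s. Qed.

Lemma longest_edge u v : G u v -> longest u + b u v <= longest v.
Proof.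
move=> Guv; rewrite -lerBrDr; apply: ge_sup; first by case: (walk_wts_sup u).
move=> _ [s [walk_s last_s] <-]; rewrite lerBrDr.
have := wt_le_longest (s := rcons s v).
by rewrite rcons_path walk_s last_s Guv last_rcons wt_rcons last_s; apply.
Qed.

Lemma longest_tight v e : 0 < e -> exists2 u, G u v & longest v - e < longest u + b u v.
Proof.
move=> e_gt0; have [_ [s [walk_s last_s] <-] near_sup] := sup_adherent e_gt0 (walk_wts_sup v).
(* A walk to [v] ending in an edge; for the empty walk at [r] use the cycle [ss]. *)
have [s' walk_s' near_s'] : exists2 s', path G r (rcons s' v) & longest v - e < wt b r (rcons s' v).
  case/lastP: s walk_s last_s near_sup => [|s' y] walk_s last_s near_sup.
    case/lastP: ss closed_ss ss_gt0 wt_ss => [//|s' y] /andP [walk_ss /eqP last_ss] _ wt0.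
    move: last_ss walk_ss wt0; rewrite last_rcons => -> walk_ss wt0.
    by move: last_s near_sup => /= <- near_sup; exists s' => //; rewrite wt0.
  by move: last_s walk_s near_sup; rewrite last_rcons => ->; exists s'.
move: walk_s' near_s'; rewrite rcons_path wt_rcons => /andP [walk_s' Guv] near_s'.
exists (last r s') => //; have := wt_le_longest walk_s' erefl; lra.
Qed.

End LongestWalk.

Lemma out_edge u v : strongly_connected G -> G u v -> exists w, G v w.
Proof.
move=> G_sc Guv; have /connectP [[|w p] /= walk_p last_p] := G_sc v u.
  by move: Guv; rewrite last_p; exists v.
by exists w; case/andP: walk_p.
Qed.

Lemma raising_balanced_exists alpha :
  strongly_connected G -> exists q, raising_balanced G (reweight alpha q).
Proof.
move=> G_sc.
case: (pickP (fun e : 'I_n * 'I_n => G e.1 e.2)) => [[u0 v0] /= Gu0v0|no_edge]; last first.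
  have G_false x y : G x y = false := no_edge (x, y).
  exists (fun=> 0) => v; apply: rhoR_eq0; rewrite /alpha_in /alpha_out.
  by do 2 case: pickP => [?|_]; rewrite ?G_false.
have cycle0 : exists x s, closed_walk x s && (0 < size s)%N.
  have /connectP [p walk_p last_p] := G_sc v0 u0.
  by exists u0, (v0 :: p); rewrite /closed_walk /= Gu0v0 walk_p last_p eqxx.
have [l [r [ss [cycle_le closed_ss ss_gt0 wt_ss]]]] := max_cycle_mean alpha cycle0.
pose b u w := alpha u w - l.
have closed_le0 x s : closed_walk x s -> wt b x s <= 0.
  by move=> closed_s; rewrite wt_subc subr_le0; apply: cycle_le.
have wt_ss0 : wt b r ss = 0 by rewrite wt_subc wt_ss subrr.
exists (longest b r) => v; apply: rhoR_eq0; apply: (@le_trans _ _ l).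
  have [u Guv _] := longest_tight G_sc closed_le0 closed_ss ss_gt0 wt_ss0 v ltr01.
  apply: alpha_out_le; first exact: out_edge G_sc Guv.
  by move=> w Gvw; have := longest_edge r G_sc closed_le0 Gvw; rewrite /reweight /b; lra.
rewrite leNgt; apply/negP => /[dup] lt_in; rewrite -subr_gt0 => gap_gt0.
have [u Guv] := longest_tight G_sc closed_le0 closed_ss ss_gt0 wt_ss0 v gap_gt0.
by have := alpha_in_ge (reweight alpha (longest b r)) Guv; rewrite /reweight /b; lra.
Qed.

Lemma raise_convergence alpha : strongly_connected G ->
  exists alphaR, raising_balanced G alphaR /\
    forall s, fair s -> forall u v, G u v ->
      (fun k => iter_ops (raise G) alpha s k u v) @ \oo --> alphaR u v.
Proof.
move=> G_sc; have [q q_bal] := raising_balanced_exists alpha G_sc.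
pose q0 u := q u - \sum_w `|q w|.
have q0_bal : raising_balanced G (reweight alpha q0) by rewrite /q0 reweight_addc.
have q0_le0 u : q0 u <= 0.
  rewrite subr_le0 (bigD1 u) //= (le_trans (ler_norm _)) // lerDl.
  by rewrite sumr_ge0.
have [[s0 s0_fair]|no_fair] := pselect (exists s : nat -> 'I_n, fair s); last first.
  by exists (reweight alpha q); split => // s s_fair; case: no_fair; exists s.
exists (reweight alpha (raise_lim alpha s0)); split.
  exact: raise_lim_balanced q0_bal q0_le0 s0_fair.
move=> s s_fair u v _; rewrite (raise_lim_eq q0_bal q0_le0 s0_fair s_fair).
have -> : (fun k => iter_ops (raise G) alpha s k u v) =
    (fun k => alpha u v + raise_pots alpha s k u - raise_pots alpha s k v).
  by apply/funext => k; rewrite iter_raise_reweight.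
apply: cvgB; last exact: raise_pots_cvg q0_bal q0_le0 v.
by apply: cvgD; [exact: cvg_cst | exact: raise_pots_cvg q0_bal q0_le0 u].
Qed.

End Balancing.

Lemma strongly_connected_rev n (G : rel 'I_n) :
  strongly_connected G -> strongly_connected (fun u v => G v u).
Proof. by move=> G_sc u v; rewrite connect_rev; apply: G_sc. Qed.

Lemma lower_transpose (R : realType) n (G : rel 'I_n) (b : 'I_n -> 'I_n -> R) v :
  lower G b v = fun x y => raise (fun u w => G w u) (fun u w => b w u) v y x.
Proof.
apply/funext => x; apply/funext => y; rewrite /lower /raise.
have -> : rhoR (fun u w => G w u) (fun u w => b w u) v = rhoL G b v by [].
case: ifP => // _; rewrite /balance /Defs.shift.
have -> : alpha_in (fun u w => G w u) (fun u w => b w u) v = alpha_out G b v by [].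
have -> : alpha_out (fun u w => G w u) (fun u w => b w u) v = alpha_in G b v by [].
ring.
Qed.

Lemma iter_lower_transpose (R : realType) n (G : rel 'I_n) (alpha : 'I_n -> 'I_n -> R) s k :
  iter_ops (lower G) alpha s k =
  fun x y => iter_ops (raise (fun u w => G w u)) (fun u w => alpha w u) s k y x.
Proof. by elim: k => [|k IHk] //=; rewrite IHk lower_transpose. Qed.

Lemma lower_convergence (R : realType) n (G : rel 'I_n) (alpha : 'I_n -> 'I_n -> R) :
  strongly_connected G ->
  exists alphaL, lowering_balanced G alphaL /\
    forall s, fair s -> forall u v, G u v ->
      (fun k => iter_ops (lower G) alpha s k u v) @ \oo --> alphaL u v.
Proof.
move=> /strongly_connected_rev/(raise_convergence (fun u w => alpha w u)) [aR [aR_bal aR_cvg]].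
exists (fun x y => aR y x); split => // s s_fair u v Guv.
by under eq_fun do rewrite iter_lower_transpose; exact: aR_cvg.
Qed.

Unset Implicit Arguments.
Set Strict Implicit.

Theorem theorem2 (R : realType) (n : nat) (G : rel 'I_n)
  (hG : strongly_connected G) (alpha : 'I_n -> 'I_n -> R) :
  (exists alphaR : 'I_n -> 'I_n -> R,
     raising_balanced G alphaR /\
     forall s : nat -> 'I_n, fair s ->
       forall u v : 'I_n, G u v ->
         (fun k => iter_ops (raise G) alpha s k u v) @ \oo --> alphaR u v)
  /\
  (exists alphaL : 'I_n -> 'I_n -> R,
     lowering_balanced G alphaL /\
     forall s : nat -> 'I_n, fair s ->
       forall u v : 'I_n, G u v ->
         (fun k => iter_ops (lower G) alpha s k u v) @ \oo --> alphaL u v).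
Proof. by split; [exact: raise_convergence | exact: lower_convergence]. Qed.
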